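(* Let $P\mapsto\nu_P(\cdot\mid x)$ be a rule assigning to each observed-data law $P$ of $O=(X,A,W,Y)$ a conditional distribution on $W$ given $X=x$, and suppose the rule is outcome-free: whenever $P_{XAW}=P'_{XAW}$ (equal marginal laws of $(X,A,W)$), $\nu_P(\cdot\mid x)=\nu_{P'}(\cdot\mid x)$ for $P_X$-almost every $x$. Define $\Psi_\nu(P):=\mathbb{E}_P\!\left[\int\Delta(w,X)\,\mathrm{d}\nu_P(w\mid X)\right]$. If $\Psi_\nu(P)=\theta_{\mathrm{ATE}}$ for every confounder-model law $P$ satisfying positivity and the confounder-model assumptions, then for every observed-data law $P$ satisfying positivity, $\nu_P(\cdot\mid X)=F_{W\mid X}(\cdot\mid X)$ $P$-almost surely, and consequently $\Psi_\nu(P)=\mathbb{E}_P\{\Delta(W,X)\}=\psi(P)$. Hence $\psi(P)$ is the unique functional of the form $P\mapsto\mathbb{E}_P[\int\Delta(w,X)\,\mathrm{d}\nu_P(w\mid X)]$ with $\nu_P$ outcome-free that coincides with the average treatment effect under the confounder model.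
   Context: $A\in\{0,1\}$; $Q(a,w,x)=\mathbb{E}_P(Y\mid A=a,W=w,X=x)$, $\Delta(w,x)=Q(1,w,x)-Q(0,w,x)$, $\psi(P)=\mathbb{E}_P\{\Delta(W,X)\}$; $F_{W\mid X}$ is the conditional law of $W$ given $X$ under $P$. Positivity: $0<\mathbb{P}(A=1\mid X=x,W=w)<1$ for $P$-a.e. $(x,w)$. Confounder-model assumptions ($W$ pre-exposure, potential outcomes $Y^{(0)},Y^{(1)}$): if $A=a$ then $Y=Y^{(a)}$ a.s.; $Y^{(a)}\perp\!\!\!\perp A\mid(X,W)$ for $a\in\{0,1\}$; $\theta_{\mathrm{ATE}}=\mathbb{E}\{Y^{(1)}-Y^{(0)}\}$. *)

From mathcomp Require Import all_boot all_algebra.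
From mathcomp Require Import all_classical all_reals all_analysis.
Import GRing.Theory Num.Theory.
Set Implicit Arguments.
Unset Strict Implicit.
Unset Printing Implicit Defensive.
Local Open Scope classical_set_scope.
Local Open Scope ring_scope.

Section Defs.
Context {R : realType} {dX dW : measure_display}
  {X : measurableType dX} {W : measurableType dW}.

Definition Obs := (X * bool * W * R)%type.
(* Full data (X, A, W, Y^(0), Y^(1)), stored as (((x, a), w), (y0, y1)). *)
Definition Full := (X * bool * W * (R * R))%type.

Definition oX (o : Obs) : X := o.1.1.1.
Definition oA (o : Obs) : bool := o.1.1.2.
Definition oW (o : Obs) : W := o.1.2.
Definition oY (o : Obs) : R := o.2.
Definition oXAW (o : Obs) : X * bool * W := o.1.
Definition oXW (o : Obs) : X * W := (o.1.1.1, o.1.2).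

Definition cexp_version {dT dS} {T : measurableType dT} {S : measurableType dS}
  (P : probability T R) (G : T -> S) (f : T -> R) (h : S -> R) : Prop :=
  measurable_fun setT h /\ P.-integrable setT (EFin \o f) /\
  forall B, measurable B ->
    (\int[P]_(t in G @^-1` B) (f t)%:E = \int[P]_(t in G @^-1` B) (h (G t))%:E)%E.

Definition propensity_version (P : probability Obs R) (e : X * W -> R) : Prop :=
  cexp_version P oXW (fun o => if oA o then 1 else 0) e.

Definition positivity (P : probability Obs R) : Prop :=
  exists e, propensity_version P e /\ {ae P, forall o, 0 < e (oXW o) < 1}.

Definition regression_version (P : probability Obs R) (Q : bool -> W -> X -> R) : Prop :=
  cexp_version P oXAW oY (fun t => Q t.1.2 t.2 t.1.1).

Definition Delta (Q : bool -> W -> X -> R) (w : W) (x : X) : R := Q true w x - Q false w x.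

Definition cond_dist_version (P : probability Obs R) (F : R.-pker X ~> W) : Prop :=
  forall B C, measurable B -> measurable C ->
    P (oX @^-1` B `&` oW @^-1` C) = (\int[P]_(o in oX @^-1` B) F (oX o) C)%E.

Definition Psi (nu : probability Obs R -> R.-pker X ~> W)
  (P : probability Obs R) (Q : bool -> W -> X -> R) : \bar R :=
  (\int[P]_o (\int[nu P (oX o)]_w (Delta Q w (oX o))%:E))%E.

Definition outcome_free (nu : probability Obs R -> R.-pker X ~> W) : Prop :=
  forall P P' : probability Obs R,
    (forall S : set (X * bool * W), measurable S ->
        P (oXAW @^-1` S) = P' (oXAW @^-1` S)) ->
    {ae P, forall o, forall C, measurable C -> nu P (oX o) C = nu P' (oX o) C}.

(* Observation map: Y = Y^(A) (consistency). *)
Definition observe (u : Full) : Obs := (u.1, if u.1.1.2 then u.2.2 else u.2.1).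

Definition observed_law (Pf : probability Full R) (P : probability Obs R) : Prop :=
  forall S, measurable S -> P S = Pf (observe @^-1` S).

Definition cond_indep {dS} {S : measurableType dS} (Pf : probability Full R)
  (Yv : Full -> R) (Av : Full -> bool) (G : Full -> S) : Prop :=
  forall (B : set R) (C : set bool), measurable B -> measurable C ->
    exists h1 h2,
      cexp_version Pf G (fun u => \1_B (Yv u)) h1 /\
      cexp_version Pf G (fun u => \1_C (Av u)) h2 /\
      cexp_version Pf G (fun u => \1_B (Yv u) * \1_C (Av u)) (h1 \* h2).

Definition fY0 (u : Full) : R := u.2.1.
Definition fY1 (u : Full) : R := u.2.2.
Definition fA (u : Full) : bool := u.1.1.2.
Definition fXW (u : Full) : X * W := (u.1.1.1, u.1.2).

(* Confounder model: potential outcomes integrable (so theta_ATE is defined),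
   and Y^(a) _||_ A | (X, W) for a in {0,1}.  Consistency is built into
   [observe]. *)
Definition confounder_model (Pf : probability Full R) : Prop :=
  Pf.-integrable setT (EFin \o fY0) /\ Pf.-integrable setT (EFin \o fY1) /\
  forall a : bool, cond_indep Pf (if a then fY1 else fY0) fA fXW.

Definition theta_ATE (Pf : probability Full R) : \bar R :=
  (\int[Pf]_u (fY1 u - fY0 u)%:E)%E.

(* The sigma-algebra of W is countably generated (true for Euclidean W). *)
Definition countably_generated : Prop :=
  exists G : nat -> set W, (@measurable _ W) = <<s range G >>.

End Defs.

From mathcomp Require Import all_boot all_order all_algebra.
From mathcomp Require Import all_classical all_reals all_analysis.
From mathcomp Require Import measurable_realfun.
Import Order.TTheory GRing.Theory Num.Theory.
Local Open Scope classical_set_scope.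
Local Open Scope ring_scope.

(* Fix a measurable g(x, w) with g(X, W) integrable, and modify P by keeping (X, A, W)
   and setting the potential outcomes to Y^(0) = 0 and Y^(1) = g(X, W).  Being functions
   of (X, W), they are conditionally independent of A given (X, W); positivity is
   inherited, the new regression function is Q(a, w, x) = a g(x, w), and the new observed
   law has the same (X, A, W)-marginal as P.  Outcome-freeness therefore replaces its nu by
   nu_P, and identification of the ATE under the modified law reads
   E_P \int g(X, w) dnu_P(w | X) = E_P g(X, W).
   For g = Delta this is the second claim.  For g(x, w) = 1_B(x) 1_C(w) it says that
   nu_P(C | .) and F_{W|X}(C | .) have the same integral over every event {X in B}, hence
   agree P_X-a.e.; a countable pi-system generating the sigma-algebra of W then gives
   agreement for all C simultaneously. *)

Lemma measurableT_preimage {d d'} {T : measurableType d} {U : measurableType d'}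
    {f : T -> U} {B : set U} :
  measurable_fun setT f -> measurable B -> measurable (f @^-1` B).
Proof. by move=> mf mB; rewrite -[f @^-1` B]setTI; exact: mf. Qed.

Section distribution.
Context d d' (T : measurableType d) (T' : measurableType d') (R : realType).
Variables (P : probability T R) (phi : {mfun T >-> T'}).
Local Open Scope ereal_scope.

(* Unlike [integral_pushforward], no integrability is needed: both sides split into
   the same positive and negative parts. *)
Lemma integral_distribution_preimage (D : set T') (f : T' -> \bar R) :
  measurable D -> measurable_fun D f ->
  \int[distribution P phi]_(y in D) f y = \int[P]_(x in phi @^-1` D) f (phi x).
Proof.
move=> mD mf; rewrite integralE [RHS]integralE.
congr (_ - _); rewrite ge0_integral_pushforward //.
- by apply: eq_integral => x _; rewrite /= !funeposE.
- exact: measurable_funepos.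
- by apply: eq_integral => x _; rewrite /= !funenegE.
- exact: measurable_funeneg.
Qed.

Lemma ae_comp_of_distribution (Q : T' -> Prop) :
  {ae distribution P phi, forall y, Q y} -> {ae P, forall x, Q (phi x)}.
Proof.
case=> N [mN PN sN]; exists (phi @^-1` N); split => //.
- exact: measurable_funPTI.
- by move=> x /= nQ; apply: sN.
Qed.

Lemma ae_distribution_of_comp (Q : T' -> Prop) : measurable [set y | ~ Q y] ->
  {ae P, forall x, Q (phi x)} -> {ae distribution P phi, forall y, Q y}.
Proof.
move=> mQ [N [mN PN sN]]; exists [set y | ~ Q y]; split => //.
by apply: (subset_measure0 _ mN) => //; exact: measurable_funPTI.
Qed.

End distribution.

Lemma integrable_ae_normr_le1 d (T : measurableType d) (R : realType)
    (P : probability T R) (f : T -> R) :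
  measurable_fun setT f -> {ae P, forall t, `|f t| <= 1} ->
  P.-integrable setT (EFin \o f).
Proof.
move=> mf f1; apply/integrableP; split; first exact/measurable_EFinP.
apply: (le_lt_trans (@integral_le_bound _ _ _ P _ _ 1%E measurableT _ _ _)) => //=.
- exact/measurable_EFinP.
- by apply: filterS f1 => t ft _; rewrite lee_fin.
- by rewrite probability_setT mule1 ltry.
Qed.

Lemma measurable_fun_integral_finite_kernel_real {d d'} {X : measurableType d}
    {Y : measurableType d'} {R : realType} (l : R.-fker X ~> Y) {f : X * Y -> R} :
  measurable_fun setT f ->
  measurable_fun setT (fun x => \int[l x]_y (f (x, y))%:E)%E.
Proof.
move=> mf; have mEf : measurable_fun setT (EFin \o f) by exact/measurable_EFinP.
rewrite (_ : (fun x => _) = (fun x => \int[l x]_y (EFin \o f)^\+ (x, y) -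
                                   \int[l x]_y (EFin \o f)^\- (x, y))%E).
  by apply: emeasurable_funB; apply: measurable_fun_integral_finite_kernel => //;
    [exact: measurable_funepos | exact: measurable_funeneg].
apply/funext => x; rewrite integralE.
by congr (_ - _)%E; apply: eq_integral => y _; rewrite /= ?funeposE ?funenegE.
Qed.

Section conditional_expectation.
Context {d d'} {T : measurableType d} {S : measurableType d'} {R : realType}.
Context {P : probability T R} {G : T -> S}.
Hypothesis mG : measurable_fun setT G.

Lemma cexp_version_comp (f : T -> R) (h : S -> R) :
  measurable_fun setT h -> P.-integrable setT (EFin \o f) ->
  (forall t, f t = h (G t)) -> cexp_version P G f h.
Proof.
move=> mh i_f fh; split=> //; split=> // B _.
by apply: eq_integral => t _; rewrite fh.
Qed.

Lemma integral_preimage_indicM (E D : set S) (v : T -> R) :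
  (\int[P]_(t in G @^-1` D) (\1_E (G t) * v t)%:E =
   \int[P]_(t in G @^-1` (D `&` E)) (v t)%:E)%E.
Proof.
rewrite preimage_setI integral_mkcondr; apply: eq_integral => t _.
rewrite patchE indicE (_ : (t \in G @^-1` E) = (G t \in E)) //.
by case: (G t \in E); rewrite ?mul1r ?mul0r.
Qed.

Lemma cexp_version_indicM {E : set S} {f : T -> R} {h : S -> R} :
  measurable E -> cexp_version P G f h ->
  cexp_version P G (fun t => \1_E (G t) * f t) (\1_E \* h).
Proof.
move=> mE [mh [i_f vf]].
have mEG : measurable_fun setT (fun t => \1_E (G t) : R).
  exact: measurableT_comp (measurable_indic mE) mG.
split; first exact: measurable_funM (measurable_indic mE) mh.
split.
  have /measurable_EFinP mf := measurable_int P i_f.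
  apply: le_integrable i_f => //.
    exact/measurable_EFinP/measurable_funM.
  move=> t _; rewrite /= !lee_fin normrM indicE.
  by case: (G t \in E); rewrite ?normr1 ?normr0 ?mul1r ?mul0r.
move=> B mB.
by rewrite !integral_preimage_indicM vf //; exact: measurableI.
Qed.

Lemma cexp_version_indic_bool {A : T -> bool} {e : S -> R} (C : set bool) :
  measurable_fun setT A -> measurable C ->
  cexp_version P G (fun t => if A t then 1 else 0) e ->
  P.-integrable setT (EFin \o (e \o G)) ->
  exists h, cexp_version P G (fun t => \1_C (A t)) h.
Proof.
move=> mA mC [me [iA ve]] ie.
suff [h [mh vh]] : exists h : S -> R, measurable_fun setT h /\
    forall B, measurable B -> (\int[P]_(t in G @^-1` B) (\1_C (A t))%:E =
                               \int[P]_(t in G @^-1` B) (h (G t))%:E)%E.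
  exists h; split=> //; split=> //.
  apply: integrable_ae_normr_le1; first exact: measurableT_comp (measurable_indic mC) mA.
  by apply: aeW => t; rewrite indicE; case: (_ \in _); rewrite ?normr1 ?normr0.
have : C `<=` [set true; false] by rewrite -setT_bool.
case/subset_set2 => ->.
- exists (cst 0); split=> // B _.
  by apply: eq_integral => t _; rewrite indic0.
- exists e; split=> // B mB; rewrite -ve //.
  apply: eq_integral => t _; rewrite indicE.
  by case: (A t); [rewrite mem_set | rewrite memNset].
- exists (fun s => 1 - e s); split=> [|B mB]; first exact: measurable_funB.
  have mGB := measurableT_preimage mG mB.
  have sub_int (f : T -> \bar R) : P.-integrable setT f -> P.-integrable (G @^-1` B) f.
    exact: integrableS.
  transitivity (\int[P]_(t in G @^-1` B)
    ((EFin \o cst 1%R) \- (EFin \o (fun t => if A t then 1%R else 0%R))) t)%E.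
    apply: eq_integral => t _; rewrite /= indicE.
    by case: (A t); [rewrite memNset //= subee | rewrite mem_set //= oppr0 adde0].
  rewrite integralB //; try exact: sub_int.
    by rewrite ve // -integralB //; try exact: sub_int; exact: finite_measure_integrable_cst.
  exact: finite_measure_integrable_cst.
- exists (cst 1); split=> // B _.
  by apply: eq_integral => t _; rewrite -setT_bool indicT.
Qed.

End conditional_expectation.

Lemma cexp_version_distribution d d' d'' (T : measurableType d)
    (T' : measurableType d') (S : measurableType d'') (R : realType)
    (P : probability T R) (phi : {mfun T >-> T'}) (G : T' -> S) (f : T' -> R)
    (h : S -> R) :
  measurable_fun setT G -> measurable_fun setT f ->
  cexp_version P (G \o phi) (f \o phi) h -> cexp_version (distribution P phi) G f h.
Proof.
move=> mG mf [mh [i_f vh]].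
have mEf : measurable_fun setT (EFin \o f) by exact/measurable_EFinP.
split=> //; split.
  by apply: integrable_pushforward => //; rewrite preimage_setT.
move=> B mB; have mGB := measurableT_preimage mG mB.
rewrite !integral_distribution_preimage //; first exact: vh.
- exact/measurable_funTS/measurable_EFinP/measurableT_comp.
- exact: measurable_funTS.
Qed.

Section countably_generated.
Context (R : realType) dW (W : measurableType dW).

Lemma countably_generated_setI_closed : @countably_generated _ W ->
  exists H : nat -> set W,
    [/\ (@measurable _ W) = <<s range H >>, setI_closed (range H) & range H setT].
Proof.
case=> G mG.
pose I (s : seq nat) : set W := foldr (fun i A => G i `&` A) setT s.
have IC s t : I (s ++ t) = I s `&` I t.
  by elim: s => [|i s IH] /=; rewrite ?setTI // IH setIA.
have mI s : measurable (I s).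
  elim: s => [|i s IH] /=; first exact: measurableT.
  by apply: measurableI => //; rewrite mG; apply: sub_sigma_algebra; exists i.
pose H n := I (odflt [::] (unpickle n)).
have rangeH : range H = range I.
  apply/seteqP; split=> _ [s _ <-]; first by exists (odflt [::] (unpickle s)).
  by exists (pickle s) => //; rewrite /H pickleK.
exists H; rewrite rangeH; split.
- apply/seteqP; split.
    rewrite mG; apply: smallest_sub; first exact: smallest_sigma_algebra.
    by move=> _ [i _ <-]; apply: sub_sigma_algebra; exists [:: i] => //=; rewrite setIT.
  apply: smallest_sub; first exact: sigma_algebra_measurable.
  by move=> _ [s _ <-].
- by move=> _ _ [s _ <-] [t _ <-]; exists (s ++ t).
- by exists [::].
Qed.

Lemma ae_eq_measure_countably_generated d (T : measurableType d)
    (mu : {measure set T -> \bar R}) (m1 m2 : T -> {measure set W -> \bar R}) :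
  @countably_generated _ W -> (forall t, (m1 t setT < +oo)%E) ->
  (forall C, measurable C -> {ae mu, forall t, m1 t C = m2 t C}) ->
  {ae mu, forall t, forall C, measurable C -> m1 t C = m2 t C}.
Proof.
case/countably_generated_setI_closed => H [mH HI HT] m1_fin m12.
have : {ae mu, forall t n, m1 t (H n) = m2 t (H n)}.
  by apply: ae_foralln => n; apply: m12; rewrite mH; apply: sub_sigma_algebra; exists n.
apply: filterS => t m12H C mC.
apply: (measure_unique (range H) (fun=> setT) mH HI) => //.
- by apply/seteqP; split=> // w _; exists 0%N.
- by move=> _ [n _ <-].
Qed.

End countably_generated.

Section observed_data.
Context {R : realType} {dX dW} {X : measurableType dX} {W : measurableType dW}.

Lemma measurable_oX : measurable_fun setT (@oX R _ _ X W).
Proof.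
exact: measurableT_comp (measurableT_comp measurable_fst measurable_fst) measurable_fst.
Qed.

Lemma measurable_oA : measurable_fun setT (@oA R _ _ X W).
Proof.
exact: measurableT_comp (measurableT_comp measurable_snd measurable_fst) measurable_fst.
Qed.

Lemma measurable_oW : measurable_fun setT (@oW R _ _ X W).
Proof. exact: measurableT_comp measurable_snd measurable_fst. Qed.

Lemma measurable_oXW : measurable_fun setT (@oXW R _ _ X W).
Proof. exact: measurable_fun_pair measurable_oX measurable_oW. Qed.

Lemma measurable_fXW : measurable_fun setT (@fXW R _ _ X W).
Proof.
apply: measurable_fun_pair; last exact: measurableT_comp measurable_snd measurable_fst.
exact: measurableT_comp (measurableT_comp measurable_fst measurable_fst) measurable_fst.
Qed.

Lemma measurable_fA : measurable_fun setT (@fA R _ _ X W).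
Proof.
exact: measurableT_comp (measurableT_comp measurable_snd measurable_fst) measurable_fst.
Qed.

Lemma measurable_observe : measurable_fun setT (@observe R _ _ X W).
Proof.
apply: measurable_fun_pair; first exact: measurable_fst.
apply: measurable_fun_ifT.
- exact: measurableT_comp (measurableT_comp measurable_snd measurable_fst) measurable_fst.
- exact: measurableT_comp measurable_snd measurable_snd.
- exact: measurableT_comp measurable_fst measurable_snd.
Qed.

End observed_data.

Section outcome_substitution.
Context {R : realType} {dX dW} {X : measurableType dX} {W : measurableType dW}.
Local Notation Obs := (@Obs R _ _ X W).
Local Notation Full := (@Full R _ _ X W).
Variables (P : probability Obs R) (g : X * W -> R).
Hypotheses (mg : measurable_fun setT g)
  (ig : P.-integrable setT (fun o => (g (oXW o))%:E)).

Definition subst_outcomes (o : Obs) : Full := (oXAW o, (0, g (oXW o))).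

Lemma measurable_subst_outcomes : measurable_fun setT subst_outcomes.
Proof.
apply: measurable_fun_pair; first exact: measurable_fst.
exact: measurable_fun_pair (measurableT_comp mg measurable_oXW).
Qed.

Definition subst_outcomes_mfun : {mfun Obs >-> Full} :=
  mfun_Sub (mem_set measurable_subst_outcomes).

Definition observe_subst_mfun : {mfun Obs >-> Obs} :=
  mfun_Sub (mem_set (measurableT_comp measurable_observe measurable_subst_outcomes)).

Definition Pf_g : probability Full R := distribution P subst_outcomes_mfun.
Definition P_g : probability Obs R := distribution P observe_subst_mfun.
Definition Q_g (a : bool) (w : W) (x : X) : R := if a then g (x, w) else 0.

Lemma observed_law_g : observed_law Pf_g P_g.
Proof. by []. Qed.

Lemma P_g_XAW S : measurable S -> P_g (oXAW @^-1` S) = P (oXAW @^-1` S).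
Proof. by []. Qed.

Lemma regression_g : regression_version P_g Q_g.
Proof.
have mQ : measurable_fun setT (fun t : X * bool * W => Q_g t.1.2 t.2 t.1.1).
  apply: measurable_fun_ifT; first exact: measurableT_comp measurable_snd measurable_fst.
    apply: measurableT_comp mg _; apply: measurable_fun_pair; last exact: measurable_snd.
    exact: measurableT_comp measurable_fst measurable_fst.
  exact: measurable_cst.
apply: cexp_version_distribution; [exact: measurable_fst | exact: measurable_snd |].
apply: cexp_version_comp => //.
apply: le_integrable ig => //.
  by apply/measurable_EFinP; apply: measurableT_comp; [exact: measurable_snd |].
move=> o _; change (`|(if oA o then g (oXW o) else 0)%:E| <= `|(g (oXW o))%:E|)%E.
by case: (oA o); rewrite // abse0 abse_ge0.
Qed.

Lemma positivity_g : positivity P -> positivity P_g.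
Proof.
case=> e [pe ae]; exists e; split.
  apply: cexp_version_distribution pe; first exact: measurable_oXW.
  apply: measurable_fun_ifT => //; exact: measurable_oA.
apply: ae_distribution_of_comp ae.
have me : measurable_fun setT (fun o : Obs => e (oXW o)).
  exact: measurableT_comp pe.1 measurable_oXW.
rewrite (_ : [set _ | _] = (fun o : Obs => e (oXW o)) @^-1` (~` `]0, 1[%classic)).
  exact: measurableT_preimage me (measurableC (measurable_itv _)).
by apply/seteqP; split=> o /=; rewrite in_itv.
Qed.

Lemma cexp_version_Pf_g {f : Full -> R} {f' : Obs -> R} {h : X * W -> R} :
  measurable_fun setT f -> (forall o, f (subst_outcomes o) = f' o) ->
  cexp_version P oXW f' h -> cexp_version Pf_g fXW f h.
Proof.
move=> mf ff' vf'; apply: cexp_version_distribution => //; first exact: measurable_fXW.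
by rewrite (_ : f \o _ = f') //; apply/funext.
Qed.

Lemma cond_indep_g {Yv : Full -> R} {y : X * W -> R} :
  measurable_fun setT Yv -> measurable_fun setT y ->
  (forall o, Yv (subst_outcomes o) = y (oXW o)) -> positivity P ->
  cond_indep Pf_g Yv fA fXW.
Proof.
move=> mYv my Yvy [e [pe ae]] B C mB mC.
have ie : P.-integrable setT (EFin \o (e \o oXW)).
  apply: integrable_ae_normr_le1; first exact: measurableT_comp pe.1 measurable_oXW.
  by apply: filterS ae => o /andP[e0 e1]; rewrite ger0_norm ?ltW.
have [h hv] := cexp_version_indic_bool measurable_oXW C measurable_oA mC pe ie.
have mBy : measurable_fun setT (\1_(y @^-1` B) : X * W -> R).
  exact/measurable_indic/measurableT_preimage.
exists (\1_(y @^-1` B)), h; split; [|split].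
- apply: (cexp_version_Pf_g (f' := fun o => \1_(y @^-1` B) (oXW o))) => [|o|].
  + exact: measurableT_comp (measurable_indic mB) mYv.
  + by rewrite /= Yvy.
  + apply: cexp_version_comp => //; apply: integrable_ae_normr_le1.
      exact: measurableT_comp mBy measurable_oXW.
    by apply: aeW => o; rewrite indicE; case: (_ \in _); rewrite ?normr1 ?normr0.
- apply: (cexp_version_Pf_g (f' := fun o => \1_C (oA o))) => //.
  exact: measurableT_comp (measurable_indic mC) measurable_fA.
- apply: (cexp_version_Pf_g (f' := fun o => \1_(y @^-1` B) (oXW o) * \1_C (oA o))) => [|o|].
  + apply: measurable_funM; first exact: measurableT_comp (measurable_indic mB) mYv.
    exact: measurableT_comp (measurable_indic mC) measurable_fA.
  + by rewrite /= Yvy.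
  + exact: (cexp_version_indicM measurable_oXW (measurableT_preimage my mB) hv).
Qed.

Lemma confounder_model_g : positivity P -> confounder_model Pf_g.
Proof.
have mY0 : measurable_fun setT (@fY0 R _ _ X W).
  exact: measurableT_comp measurable_fst measurable_snd.
have mY1 : measurable_fun setT (@fY1 R _ _ X W).
  exact: measurableT_comp measurable_snd measurable_snd.
move=> pos; split; [|split].
- apply: integrable_pushforward => //; first exact/measurable_EFinP.
  by rewrite preimage_setT; exact: finite_measure_integrable_cst.
- by apply: integrable_pushforward => //; first exact/measurable_EFinP.
- case; [exact: (cond_indep_g (y := g)) | exact: (cond_indep_g (y := cst 0))].
Qed.

Lemma theta_ATE_g : theta_ATE Pf_g = (\int[P]_o (g (oXW o))%:E)%E.
Proof.
rewrite /theta_ATE integral_distribution_preimage //; last first.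
  apply/measurable_EFinP/measurable_funB.
    exact: measurableT_comp measurable_snd measurable_snd.
  exact: measurableT_comp measurable_fst measurable_snd.
by rewrite preimage_setT; apply: eq_integral => o _; rewrite /= subr0.
Qed.

Lemma Psi_g (nu : probability Obs R -> R.-pker X ~> W) : outcome_free nu ->
  Psi nu P_g Q_g = (\int[P]_o \int[nu P (oX o)]_w (g (oX o, w))%:E)%E.
Proof.
move=> nu_free.
have mDelta : measurable_fun setT (fun p : X * W => Delta Q_g p.2 p.1).
  by rewrite (_ : (fun p => _) = g) //; apply/funext => -[x w]; rewrite /Delta /Q_g subr0.
have mK (k : R.-pker X ~> W) : measurable_fun setT
    (fun o : Obs => \int[k (oX o)]_w (Delta Q_g w (oX o))%:E)%E.
  exact: measurableT_comp (measurable_fun_integral_finite_kernel_real k mDelta) measurable_oX.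
rewrite /Psi; transitivity (\int[P_g]_o \int[nu P (oX o)]_w (Delta Q_g w (oX o))%:E)%E.
  apply: ae_eq_integral; [exact: measurableT | exact: (mK (nu P_g)) | exact: (mK (nu P)) |].
  apply: filterS (nu_free P_g P P_g_XAW) => o nuPP _.
  by apply: eq_measure_integral => C mC _; rewrite nuPP.
rewrite integral_distribution_preimage // preimage_setT.
by apply: eq_integral => o _; apply: eq_integral => w _; rewrite /Delta /Q_g subr0.
Qed.

End outcome_substitution.

Section identification.
Context (R : realType) dX dW (X : measurableType dX) (W : measurableType dW).
Local Notation Obs := (@Obs R _ _ X W).
Local Notation Full := (@Full R _ _ X W).
Variable nu : probability Obs R -> R.-pker X ~> W.
Hypothesis nu_free : outcome_free nu.
Hypothesis nu_ATE : forall (Pf : probability Full R) (P : probability Obs R),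
  confounder_model Pf -> observed_law Pf P -> positivity P ->
  forall Q, regression_version P Q -> Psi nu P Q = theta_ATE Pf.
Variable P : probability Obs R.
Hypothesis P_pos : positivity P.

Lemma integral_nu_identity {g : X * W -> R} : measurable_fun setT g ->
  P.-integrable setT (fun o => (g (oXW o))%:E) ->
  (\int[P]_o \int[nu P (oX o)]_w (g (oX o, w))%:E = \int[P]_o (g (oXW o))%:E)%E.
Proof.
move=> mg ig; rewrite -(Psi_g P g mg nu nu_free) -(theta_ATE_g P g).
apply: nu_ATE; [exact: confounder_model_g | exact: observed_law_g |
                exact: positivity_g | exact: regression_g].
Qed.

Lemma Psi_eq_psi Q : regression_version P Q ->
  P.-integrable setT (fun o => (Delta Q (oW o) (oX o))%:E) ->
  Psi nu P Q = (\int[P]_o (Delta Q (oW o) (oX o))%:E)%E.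
Proof.
move=> [mQ _] iQ.
have mQa (a : bool) : measurable_fun setT (fun p : X * W => Q a p.2 p.1) :=
  measurableT_comp mQ (measurable_fun_pair
    (measurable_fun_pair measurable_fst (measurable_cst a)) measurable_snd).
have mDelta : measurable_fun setT (fun p : X * W => Delta Q p.2 p.1) :=
  measurable_funB (mQa true) (mQa false).
exact: integral_nu_identity mDelta iQ.
Qed.

Lemma integral_nu_preimage B C : measurable B -> measurable C ->
  (\int[P]_(o in oX @^-1` B) nu P (oX o) C = P (oX @^-1` B `&` oW @^-1` C))%E.
Proof.
move=> mB mC.
pose g (p : X * W) : R := \1_B p.1 * \1_C p.2.
have mg : measurable_fun setT g.
  apply: measurable_funM; first exact: measurableT_comp (measurable_indic mB) measurable_fst.
  exact: measurableT_comp (measurable_indic mC) measurable_snd.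
have ig : P.-integrable setT (fun o => (g (oXW o))%:E).
  apply: (@integrable_ae_normr_le1 _ _ _ _ (g \o oXW)).
    exact: measurableT_comp mg measurable_oXW.
  apply: aeW => o; rewrite /g /= normrM !indicE.
  by case: (_ \in B); case: (_ \in C); rewrite ?normr1 ?normr0 ?mulr1 ?mulr0.
have := integral_nu_identity mg ig.
have -> : (\int[P]_o \int[nu P (oX o)]_w (g (oX o, w))%:E =
           \int[P]_(o in oX @^-1` B) nu P (oX o) C)%E.
  rewrite [RHS]integral_mkcond; apply: eq_integral => o _.
  under eq_integral do rewrite /g /= EFinM.
  rewrite ge0_integralZl_EFin //; last exact/measurable_EFinP/measurable_indic.
  rewrite integral_indic // setIT patchE indicE (_ : (o \in oX @^-1` B) = (oX o \in B)) //.
  by case: (oX o \in B); rewrite ?mul1e ?mul0e.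
move=> ->; rewrite -[X in P X]setIT -integral_indic //.
  by apply: eq_integral => o _; rewrite indicI.
by apply: measurableI; apply: measurableT_preimage => //;
  [exact: measurable_oX | exact: measurable_oW].
Qed.

Lemma nu_ae_eq_cond_dist F : cond_dist_version P F ->
  forall C, measurable C -> {ae P, forall o, nu P (oX o) C = F (oX o) C}.
Proof.
move=> hF C mC.
pose PX : probability X R := distribution P (mfun_Sub (mem_set (@measurable_oX R _ _ X W))).
have mnu : measurable_fun setT (fun x => nu P x C) := measurable_kernel (nu P) C mC.
have mF : measurable_fun setT (fun x => F x C) := measurable_kernel F C mC.
have nu_int : PX.-integrable setT (fun x => nu P x C).
  apply: le_integrable (finite_measure_integrable_cst PX 1 measurableT) => // x _.
  rewrite /= normr1 gee0_abs // -(prob_kernel (s := nu P) x).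
  by apply: le_measure; rewrite ?inE.
have nu_F : forall B, B `<=` setT -> measurable B ->
    (\int[PX]_(x in B) nu P x C = \int[PX]_(x in B) F x C)%E.
  move=> B _ mB; rewrite !integral_distribution_preimage //; try exact: measurable_funTS.
  transitivity (P (oX @^-1` B `&` oW @^-1` C)); first exact: integral_nu_preimage.
  exact: hF.
have /ae_comp_of_distribution := integral_ae_eq measurableT nu_int mF nu_F.
by apply: filterS => o /(_ I).
Qed.

End identification.

Theorem theorem4 (R : realType) (dX dW : measure_display)
  (X : measurableType dX) (W : measurableType dW)
  (nu : probability (@Obs R _ _ X W) R -> R.-pker X ~> W) :
  @countably_generated _ W ->
  outcome_free nu ->
  (forall (Pf : probability (@Full R _ _ X W) R) (P : probability (@Obs R _ _ X W) R),
      confounder_model Pf -> observed_law Pf P -> positivity P ->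
      forall Q, regression_version P Q -> Psi nu P Q = theta_ATE Pf) ->
  forall P : probability (@Obs R _ _ X W) R, positivity P ->
    (forall F, cond_dist_version P F ->
       {ae P, forall o, forall C, measurable C -> nu P (oX o) C = F (oX o) C}) /\
    (forall Q, regression_version P Q ->
       P.-integrable setT (fun o => (Delta Q (oW o) (oX o))%:E) ->
       Psi nu P Q = (\int[P]_o (Delta Q (oW o) (oX o))%:E)%E).
Proof.
move=> W_cg nu_free nu_ATE P P_pos; split; last exact: Psi_eq_psi.
move=> F hF; apply: ae_eq_measure_countably_generated => //.
- by move=> o; rewrite prob_kernel ltry.
- exact: nu_ae_eq_cond_dist.
Qed.
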